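(* Let $\mathcal{H}=(\mathcal{V},\mathcal{E})$ be a connected Sperner hypergraph with $|\mathcal{E}|\ge 2$. (i) If $F(\mathcal{H})\neq\emptyset$, then $(\lambda-1)^2$ divides $P(\mathcal{H},\lambda)$ if and only if $|F(\mathcal{H})|=1$. (ii) Suppose $F(\mathcal{H})=\emptyset$ and there are a vertex $w$ and two proper subsets $\mathcal{V}_1,\mathcal{V}_2$ of $\mathcal{V}$ with $\mathcal{V}_1\cup\mathcal{V}_2=\mathcal{V}$, $\mathcal{V}_1\cap\mathcal{V}_2=\{w\}$, and such that every $e\in\mathcal{E}$ satisfies $w\in e$ or $e\subseteq\mathcal{V}_i$ for some $i\in\{1,2\}$. Then $(\lambda-1)^2$ divides $P(\mathcal{H},\lambda)$ if and only if one of the following holds: (a) $\mathcal{V}_1\notin\mathcal{I}(\mathcal{H})$ and $\mathcal{V}_2\notin\mathcal{I}(\mathcal{H})$; (b) for some $i\in\{1,2\}$, $\mathcal{V}_i\in\mathcal{I}(\mathcal{H})$, $\mathcal{V}_{3-i}\notin\mathcal{I}(\mathcal{H})$, and $(\lambda-1)^2$ divides $P(\mathcal{H}\cdot\mathcal{V}_i,\lambda)$.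
   Context: A hypergraph $\mathcal{H}=(\mathcal{V},\mathcal{E})$ consists of a finite vertex set $\mathcal{V}$ and a set $\mathcal{E}$ of subsets of $\mathcal{V}$, each of size at least $1$, called edges. For a positive integer $\lambda$, a weak proper $\lambda$-colouring of $\mathcal{H}$ is a map $\phi:\mathcal{V}\to\{1,\dots,\lambda\}$ such that $|\{\phi(v):v\in e\}|>1$ for every $e\in\mathcal{E}$. $P(\mathcal{H},\lambda)$ denotes the number of weak proper $\lambda$-colourings; it is a polynomial in $\lambda$. $\mathcal{H}$ is connected if for any two vertices $v_1,v_2$ there is a sequence of edges $e_0,\dots,e_k$ with $v_1\in e_0$, $v_2\in e_k$, $e_i\cap e_{i+1}\ne\emptyset$. $\mathcal{H}$ is Sperner if $e_1\not\subseteq e_2$ for all distinct edges $e_1,e_2$. $F(\mathcal{H})$ is the set of vertices lying in every edge of $\mathcal{H}$. For $\mathcal{V}_0\subseteq\mathcal{V}$, $\mathcal{H}[\mathcal{V}_0]$ is the hypergraph with vertex set $\mathcal{V}_0$ and edge set $\{e\in\mathcal{E}:e\subseteq\mathcal{V}_0\}$, and $\mathcal{I}(\mathcal{H})$ is the set of subsets $\mathcal{V}_0\subseteq\mathcal{V}$ such that $\mathcal{H}[\mathcal{V}_0]$ has no edges. $\mathcal{H}\cdot\mathcal{V}_0$ is obtained by identifying all vertices of $\mathcal{V}_0$ into one new vertex $w'$: its vertex set is $(\mathcal{V}\setminus\mathcal{V}_0)\cup\{w'\}$ and its edge set is $\{e\in\mathcal{E}:e\cap\mathcal{V}_0=\emptyset\}\cup\{(e\setminus\mathcal{V}_0)\cup\{w'\}:e\cap\mathcal{V}_0\ne\emptyset\}$.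 *)

From HB Require Import structures.
From mathcomp Require Import all_boot all_order all_algebra.
Set Implicit Arguments. Unset Strict Implicit. Unset Printing Implicit Defensive.
Import Order.TTheory GRing.Theory Num.Theory.
Local Open Scope ring_scope.

Definition hypergraph (T : finType) (V : {set T}) (E : {set {set T}}) : Prop :=
  forall e, e \in E -> e \subset V /\ e != set0.

Definition hconnected (T : finType) (V : {set T}) (E : {set {set T}}) : Prop :=
  forall v1 v2, v1 \in V -> v2 \in V ->
    exists (e0 : {set T}) (s : seq {set T}),
      [/\ all (fun e => e \in E) (e0 :: s), v1 \in e0, v2 \in last e0 s
        & path (fun a b : {set T} => a :&: b != set0) e0 s].

Definition sperner (T : finType) (E : {set {set T}}) : Prop :=
  forall e1 e2, e1 \in E -> e2 \in E -> e1 != e2 -> ~~ (e1 \subset e2).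

Definition Fcore (T : finType) (V : {set T}) (E : {set {set T}}) : {set T} :=
  [set v in V | [forall e in E, v \in e]].

Definition indep (T : finType) (V : {set T}) (E : {set {set T}}) (V0 : {set T}) : bool :=
  (V0 \subset V) && [forall e in E, ~~ (e \subset V0)].

Definition weak_proper (T : finType) (V : {set T}) (E : {set {set T}}) (l : nat)
  (f : {ffun {x : T | x \in V} -> 'I_l}) : bool :=
  [forall e in E, exists x : {x : T | x \in V}, exists y : {x : T | x \in V},
     [&& val x \in e, val y \in e & f x != f y]].

Definition chrom_count (T : finType) (V : {set T}) (E : {set {set T}}) (l : nat) : nat :=
  #|[set f : {ffun {x : T | x \in V} -> 'I_l} | weak_proper E f]|.

Definition is_chrom_poly (T : finType) (V : {set T}) (E : {set {set T}})
  (p : {poly int}) : Prop :=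
  forall l : nat, (0 < l)%N -> (p.[l%:R] = (chrom_count V E l)%:R)%R.

(* H . V0 : identify V0 into a new vertex w' (= None on the type option T). *)
Definition contr_V (T : finType) (V V0 : {set T}) : {set option T} :=
  None |: [set Some x | x in V :\: V0].

Definition contr_E (T : finType) (E : {set {set T}}) (V0 : {set T}) : {set {set option T}} :=
  [set (if e :&: V0 == set0 then [set Some x | x in e]
        else None |: [set Some x | x in e :\: V0]) | e in E].

From HB Require Import structures.
From mathcomp Require Import all_boot all_order all_algebra fingroup perm.
From mathcomp Require Import zify.
Set Implicit Arguments. Unset Strict Implicit. Unset Printing Implicit Defensive.
Import Order.TTheory GRing.Theory Num.Theory.

(* Write lambda = k + 1: (lambda - 1)^2 divides P iff k^2 divides P(k + 1) for every k, and
   P(k + 1) is k + 1 times the number of colourings giving a chosen vertex the colour 0.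
   (i) If u lies in every edge and f u = 0, an edge is monochromatic iff it lies in the zero set
   of f; so P(k + 1) / (k + 1) is the sum of k^|V \ Z| over the edge-free zero sets Z containing u,
   and modulo k^2 only the sets Z = V \ {v} survive, which are edge-free iff v is in F(H) \ {u}.
   (ii) If some edge avoiding w lies in V1, a colouring with f w = 0 that is not constant on V2
   uses a nonzero colour on both sides of the cut; its nonzero colours can be permuted globally
   and, independently, on V2 alone, so such colourings come in families of size k^2. The
   colourings constant on V2 are those of H . V2. If no edge avoiding w lies in V1 or in V2, then
   w is in F(H). *)

Definition nonmono (U : finType) n (f : {ffun U -> 'I_n}) (e : {set U}) : bool :=
  [exists x in e, exists y in e, f x != f y].

Definition wproper (U : finType) n (E : {set {set U}}) (f : {ffun U -> 'I_n}) : bool :=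
  [forall e in E, nonmono f e].

Definition const_off (U : finType) n (V : {set U}) (b : U) (f : {ffun U -> 'I_n}) : bool :=
  [forall x, (x \notin V) ==> (f x == f b)].

Lemma card_in_bij (aT rT : finType) (A : {set aT}) (B : {set rT})
    (g : aT -> rT) (h : rT -> aT) :
  {in A, forall x, g x \in B} -> {in B, forall y, h y \in A} ->
  {in A, cancel g h} -> {in B, cancel h g} -> #|A| = #|B|.
Proof.
move=> gAB hBA gK hK; rewrite -(card_in_imset (can_in_inj gK)).
suff -> : [set g x | x in A] = B by [].
apply/setP => y; apply/imsetP/idP => [[x xA ->]|yB]; first exact: gAB.
by exists (h y); [exact: hBA | rewrite hK].
Qed.

Lemma nonmono_img (U1 U2 : finType) n (f : {ffun U1 -> 'I_n}) (g : {ffun U2 -> 'I_n})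
    (e : {set U1}) (e' : {set U2}) :
  (forall x, x \in e -> exists2 a, a \in e' & g a = f x) ->
  (forall a, a \in e' -> exists2 x, x \in e & f x = g a) ->
  nonmono f e = nonmono g e'.
Proof.
have img (U U' : finType) (f1 : {ffun U -> 'I_n}) (g1 : {ffun U' -> 'I_n})
    (e1 : {set U}) (e1' : {set U'}) :
    (forall x, x \in e1 -> exists2 a, a \in e1' & g1 a = f1 x) ->
    nonmono f1 e1 -> nonmono g1 e1'.
  move=> H /exists_inP [x xe /exists_inP [y ye nxy]].
  have [a ae gaf] := H x xe; have [b be gbf] := H y ye.
  by apply/exists_inP; exists a => //; apply/exists_inP; exists b; rewrite // gaf gbf.
by move=> H1 H2; apply/idP/idP; apply: img.
Qed.

Lemma nonmono_pattern (U : finType) n (f g : {ffun U -> 'I_n}) (e : {set U}) :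
  {in e &, forall x y, (g x == g y) = (f x == f y)} -> nonmono g e = nonmono f e.
Proof.
move=> H; apply/idP/idP => /exists_inP [x xe /exists_inP [y ye nxy]];
  apply/exists_inP; exists x => //; apply/exists_inP; exists y => //; by rewrite ?H // -?H.
Qed.

Lemma nonmonoE_at (U : finType) n (f : {ffun U -> 'I_n}) (e : {set U}) z : z \in e ->
  nonmono f e = [exists y in e, f y != f z].
Proof.
move=> ze; apply/idP/idP => [/exists_inP [x xe /exists_inP [y ye nxy]]|].
  apply/exists_inP; have [fxz|] := eqVneq (f x) (f z); last by exists x.
  by exists y => //; rewrite -fxz eq_sym.
by case/exists_inP => y ye nyz; apply/exists_inP; exists y => //; apply/exists_inP; exists z.
Qed.

Lemma chrom_count_total (T : finType) (V : {set T}) (E : {set {set T}}) (b : T) (l : nat) :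
  b \in V -> (forall e, e \in E -> e \subset V) ->
  chrom_count V E l = #|[set f : {ffun T -> 'I_l} | const_off V b f && wproper E f]|.
Proof.
move=> bV EV; pose b' : {x : T | x \in V} := exist _ b bV.
pose ext (g : {ffun {x : T | x \in V} -> 'I_l}) := [ffun x => g (insubd b' x)] : {ffun T -> 'I_l}.
pose res (f : {ffun T -> 'I_l}) := [ffun y : {x : T | x \in V} => f (val y)].
have insV x : x \in V -> val (insubd b' x) = x by move=> xV; rewrite insubdK.
have insN x : x \notin V -> insubd b' x = b' by move=> xV; rewrite /insubd insubN.
have insb : insubd b' b = b' by apply: val_inj; rewrite insV.
apply: (card_in_bij (g := ext) (h := res)).
- move=> g; rewrite !inE => gP; apply/andP; split.
    by apply/forallP => x; apply/implyP => xV; rewrite !ffunE insN // insb.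
  apply/forall_inP => e eE; have /existsP [x /existsP [y /and3P [xe ye nxy]]] := forall_inP gP e eE.
  apply/exists_inP; exists (val x) => //.
  by apply/exists_inP; exists (val y); rewrite // !ffunE !valKd.
- move=> f; rewrite !inE => /andP [_ fP]; apply/forall_inP => e eE.
  have /exists_inP [x xe /exists_inP [y ye nxy]] := forall_inP fP e eE.
  apply/existsP; exists (insubd b' x); apply/existsP; exists (insubd b' y).
  by rewrite !ffunE !insV ?xe ?ye ?(subsetP (EV e eE)).
- by move=> g _; apply/ffunP => y; rewrite !ffunE valKd.
- move=> f; rewrite inE => /andP [fV _]; apply/ffunP => x; rewrite !ffunE.
  have [xV|xV] := boolP (x \in V); first by rewrite insV.
  by rewrite insN //= (eqP (implyP (forallP fV x) xV)).
Qed.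

Definition contr_pt (T : finType) (V0 : {set T}) (x : T) : option T :=
  if x \in V0 then None else Some x.

Definition contr_edge (T : finType) (V0 e : {set T}) : {set option T} :=
  if e :&: V0 == set0 then [set Some x | x in e] else None |: [set Some x | x in e :\: V0].

Lemma contr_EE (T : finType) (E : {set {set T}}) (V0 : {set T}) :
  contr_E E V0 = [set contr_edge V0 e | e in E].
Proof. by []. Qed.

Lemma mem_contr_V_Some (T : finType) (V V0 : {set T}) x :
  (Some x \in contr_V V V0) = (x \in V) && (x \notin V0).
Proof. by rewrite in_setU1 /= mem_imset ?inE 1?andbC //; move=> a b []. Qed.

Lemma contr_edgeE (T : finType) (V0 e : {set T}) :
  contr_edge V0 e = [set contr_pt V0 x | x in e].
Proof.
apply/setP => a; rewrite /contr_edge /contr_pt.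
case: eqP => [eV0|/eqP /set0Pn [z /setIP [ze zV0]]].
  have xV0 x : x \in e -> x \notin V0.
    move=> xe; apply/negP => xV0.
    have : x \in e :&: V0 by rewrite inE xe xV0.
    by rewrite eV0 inE.
  by apply/imsetP/imsetP => [] [x xe ->]; exists x; rewrite ?(negPf (xV0 x xe)).
rewrite in_setU1; apply/orP/imsetP => [[/eqP ->|/imsetP [x /setDP [xe /negPf xV0] ->]]|].
- by exists z; rewrite ?zV0.
- by exists x; rewrite ?xV0.
case=> x xe ->; case: ifP => xV0; [left | right] => //.
by apply/imsetP; exists x; rewrite // inE xV0.
Qed.

Lemma wproper_contr (T : finType) n (V V0 : {set T}) (E : {set {set T}})
    (f : {ffun T -> 'I_n}) (g : {ffun option T -> 'I_n}) :
  (forall e, e \in E -> e \subset V) -> {in V, forall x, f x = g (contr_pt V0 x)} ->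
  wproper E f = wproper (contr_E E V0) g.
Proof.
move=> EV fg; have nm e : e \in E -> nonmono f e = nonmono g (contr_edge V0 e).
  move=> eE; have fge := sub_in1 (subsetP (EV e eE)) fg.
  apply: nonmono_img => [x xe|a].
    by exists (contr_pt V0 x); rewrite ?fge ?contr_edgeE ?imset_f.
  by rewrite contr_edgeE => /imsetP [x xe ->]; exists x; rewrite ?fge.
apply/forall_inP/forall_inP => [fP _ /imsetP [e eE ->]|gP e eE]; rewrite -?nm ?fP //.
by rewrite nm ?gP ?contr_EE ?imset_f.
Qed.

Lemma chrom_count_contr (T : finType) (V V0 : {set T}) (E : {set {set T}}) (w : T) (l : nat) :
  w \in V0 -> V0 \subset V -> (forall e, e \in E -> e \subset V) ->
  chrom_count (contr_V V V0) (contr_E E V0) l =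
  #|[set f : {ffun T -> 'I_l} |
       [&& const_off V w f, wproper E f & [forall x in V0, f x == f w]]]|.
Proof.
move=> wV0 V0V EV; have wV := subsetP V0V w wV0.
have NV : None \in contr_V V V0 by rewrite setU11.
have ptV x : x \in V -> contr_pt V0 x \in contr_V V V0.
  by rewrite /contr_pt; case: ifP => // /negbT xV0 xV; rewrite mem_contr_V_Some xV.
have cEV e : e \in contr_E E V0 -> e \subset contr_V V V0.
  rewrite contr_EE => /imsetP [e' /EV /subsetP e'V ->]; rewrite contr_edgeE.
  by apply/subsetP => _ /imsetP [x /e'V xV ->]; exact: ptV.
rewrite (chrom_count_total l NV cEV).
pose gam (g : {ffun option T -> 'I_l}) :=
  [ffun x => g (if x \in V then contr_pt V0 x else None)] : {ffun T -> 'I_l}.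
pose del (f : {ffun T -> 'I_l}) :=
  [ffun o => if o is Some x then (if (x \in V) && (x \notin V0) then f x else f w) else f w]
  : {ffun option T -> 'I_l}.
have gamE g : {in V, forall x, gam g x = g (contr_pt V0 x)} by move=> x xV; rewrite ffunE xV.
have delE (f : {ffun T -> 'I_l}) :
    [forall x in V0, f x == f w] -> {in V, forall x, f x = del f (contr_pt V0 x)}.
  move=> /forall_inP fV0 x xV; rewrite /contr_pt ffunE.
  by case: ifP => [/fV0 /eqP|/negbT xV0]; rewrite ?xV ?xV0.
apply: (card_in_bij (g := gam) (h := del)).
- move=> g; rewrite !inE => /andP [_ gP]; apply/and3P; split.
  + by apply/forallP => x; apply/implyP => /negPf xV; rewrite !ffunE xV wV /contr_pt wV0.
  + by rewrite (wproper_contr EV (gamE g)).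
  + by apply/forall_inP => x xV0; rewrite !ffunE (subsetP V0V x xV0) wV /contr_pt xV0 wV0.
- move=> f; rewrite !inE => /and3P [fV fP fV0]; apply/andP; split.
  + apply/forallP => -[x|]; rewrite ?NV // mem_contr_V_Some !ffunE.
    by case: ifP; rewrite ?eqxx ?implybT.
  + by rewrite -(wproper_contr EV (delE f fV0)).
- move=> g; rewrite inE => /andP [gV _]; apply/ffunP => -[x|]; rewrite !ffunE; last first.
    by rewrite wV /contr_pt wV0.
  case: ifP => xin; first by rewrite /contr_pt; case/andP: xin => -> /negPf ->.
  rewrite wV /contr_pt wV0; apply/esym/eqP.
  by apply: (implyP (forallP gV (Some x))); rewrite mem_contr_V_Some xin.
- move=> f; rewrite inE => /and3P [fV _ fV0]; apply/ffunP => x.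
  have [xV|xV] := boolP (x \in V); first by rewrite ffunE xV -delE.
  by rewrite !ffunE (negPf xV) (eqP (implyP (forallP fV x) xV)).
Qed.

Definition recolour (T : finType) n (R : {set T}) (a b : 'I_n) (f : {ffun T -> 'I_n}) :
  {ffun T -> 'I_n} := [ffun y => if y \in R then tperm a b (f y) else f y].

Lemma recolourK (T : finType) n (R : {set T}) (a b : 'I_n) : involutive (recolour R a b).
Proof. by move=> f; apply/ffunP => y; rewrite !ffunE; case: (y \in R); rewrite ?tpermK. Qed.

(* Swapping colours [c0] and [c] inside [R] identifies the colourings with [f x = c0]
   and those with [f x = c]. *)
Lemma card_colour_at (T : finType) n (x : T) (R : {set T}) (C : {set 'I_n}) (c0 : 'I_n)
    (S : {set {ffun T -> 'I_n}}) :
  x \in R -> c0 \in C -> (forall f, f \in S -> f x \in C) ->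
  (forall c f, c \in C -> f \in S -> recolour R c0 c f \in S) ->
  #|S| = #|C| * #|[set f in S | f x == c0]|.
Proof.
move=> xR c0C SC Sinv.
have eqc c : c \in C -> #|[set f in S | f x == c]| = #|[set f in S | f x == c0]|.
  move=> cC; apply: (card_in_bij (g := recolour R c0 c) (h := recolour R c0 c));
    try by move=> f _; rewrite recolourK.
  - by move=> f; rewrite !inE => /andP [Sf /eqP fx]; rewrite Sinv //= ffunE xR fx tpermR.
  - by move=> f; rewrite !inE => /andP [Sf /eqP fx]; rewrite Sinv //= ffunE xR fx tpermL.
rewrite -sum1_card (partition_big (fun f : {ffun T -> 'I_n} => f x) (mem C)) //=.
rewrite -sum_nat_const; apply: eq_bigr => c cC.
by rewrite -(eqc c cC) -sum1_card; apply: eq_bigl => f; rewrite !inE.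
Qed.

Definition same_pattern (T : finType) n (f g : {ffun T -> 'I_n}) : Prop :=
  forall y z, (g y == g z) = (f y == f z).

Lemma same_pattern_recolour (T : finType) n (a b : 'I_n) (f : {ffun T -> 'I_n}) :
  same_pattern f (recolour setT a b f).
Proof. by move=> y z; rewrite !ffunE !in_setT (inj_eq perm_inj). Qed.

Lemma card_colouring_normal (T : finType) k (w : T) (S : {set {ffun T -> 'I_k.+1}}) :
  (forall f g, same_pattern f g -> (g \in S) = (f \in S)) ->
  #|S| = k.+1 * #|[set f in S | f w == ord0]|.
Proof.
move=> HS.
have := @card_colour_at _ _ w setT setT ord0 S (in_setT w) (in_setT _) (fun f _ => in_setT _).
rewrite cardsT card_ord; apply=> c f _ Sf.
by rewrite (HS f _ (same_pattern_recolour ord0 c f)).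
Qed.

Lemma same_pattern_colouring (T : finType) n (V V0 : {set T}) (E : {set {set T}}) (w : T)
    (f g : {ffun T -> 'I_n}) :
  same_pattern f g ->
  [/\ const_off V w g = const_off V w f, wproper E g = wproper E f &
      [forall x in V0, g x == g w] = [forall x in V0, f x == f w]].
Proof.
move=> fg; split; try by apply: eq_forallb => x; rewrite fg.
by apply: eq_forallb => e; congr (_ ==> _); apply: nonmono_pattern => x y _ _.
Qed.

Definition zeros (T : finType) n (f : {ffun T -> 'I_n.+1}) : {set T} := [set x | f x == ord0].

Lemma card_zeros_eq (T : finType) k (Z : {set T}) :
  #|[set f : {ffun T -> 'I_k.+1} | zeros f == Z]| = k ^ #|~: Z|.
Proof.
pose F x := if x \in Z then pred1 (ord0 : 'I_k.+1) else predC1 ord0.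
have -> : [set f : {ffun T -> 'I_k.+1} | zeros f == Z] = [set f in family F].
  apply/setP => f; rewrite !inE; apply/eqP/familyP => [zf x|fF].
    by rewrite /F -zf !inE; case: eqP => [->|/eqP]; rewrite !inE.
  apply/setP => x; rewrite inE; have := fF x; rewrite /F.
  by case: (x \in Z); rewrite !inE; [exact: id | exact: negPf].
rewrite cardsE card_family foldrE big_image /= -[k ^ _]prod_nat_const [RHS]big_mkcond.
by apply: eq_big => // x _; rewrite /F inE; case: (x \in Z); rewrite ?card1 ?cardC1 ?card_ord.
Qed.

Lemma expn_split_sq k m :
  k ^ m = (m == 0) + k * (m == 1) + k ^ 2 * (if (1 < m)%N then k ^ (m - 2) else 0).
Proof.
by case: m => [|[|m]] /=; rewrite ?muln0 ?muln1 ?addn0 // add0n subn2 -expnD.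
Qed.

Lemma card_zeros_mod_sq (T : finType) k (Q : pred {set T}) : exists m,
  #|[set f : {ffun T -> 'I_k.+1} | Q (zeros f)]| =
  Q setT + k * #|[set v | Q (~: [set v])]| + k ^ 2 * m.
Proof.
have -> : #|[set f : {ffun T -> 'I_k.+1} | Q (zeros f)]| = \sum_(Z | Q Z) k ^ #|~: Z|.
  rewrite -sum1_card (partition_big (@zeros T k) Q) /=; last by move=> f; rewrite inE.
  apply: eq_bigr => Z QZ; rewrite -card_zeros_eq -sum1_card; apply: eq_bigl => f.
  by rewrite !inE; apply/andP/idP => [[] //|/eqP zf]; rewrite zf QZ.
rewrite (eq_bigr _ (fun Z _ => expn_split_sq k #|~: Z|)) !big_split /= -!big_distrr /=.
have cardC0 (Z : {set T}) : (#|~: Z| == 0) = (Z == setT).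
  by rewrite cards_eq0 -setCT (inj_eq (@setC_inj _)).
eexists; congr (_ + _ + _).
  under eq_bigr do rewrite cardC0.
  rewrite -big_mkcondr /=; have [QT|/negPf QT] := boolP (Q setT).
    by rewrite (big_pred1 setT) // => Z /=; rewrite andbC; case: eqP => // ->.
  by rewrite big_pred0 // => Z; case: eqP => [->|]; rewrite ?andbF ?QT.
rewrite -big_mkcondr /= sum1_card; congr (_ * _).
rewrite -(card_in_imset (f := fun v : T => ~: [set v])); last first.
  by move=> x y _ _ /setC_inj /set1_inj.
apply: eq_card => Z; rewrite unfold_in; apply/andP/imsetP => [[QZ /cards1P [x ex]]|[x]].
  by exists x; rewrite -?ex ?setCK // inE -ex setCK.
by rewrite inE => Qx ->; rewrite setCK cards1 Qx.
Qed.

Lemma chrom_count_core (T : finType) (V : {set T}) (E : {set {set T}}) (u : T) k :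
  (forall e, e \in E -> e \subset V) -> E != set0 -> u \in Fcore V E ->
  exists m, chrom_count V E k.+1 = k * (#|Fcore V E| - 1) + k ^ 2 * m.
Proof.
move=> EV /set0Pn [e0 e0E] uF; have /setIdP [uV /forall_inP uE] := uF.
rewrite (chrom_count_total k.+1 uV EV) (card_colouring_normal u); last first.
  by move=> f g /(same_pattern_colouring V V E u) [fV fP _]; rewrite !inE fV fP.
pose Q (Z : {set T}) := [&& u \in Z, ~: V \subset Z & [forall e in E, ~~ (e \subset Z)]].
have -> : #|[set f in [set f : {ffun T -> 'I_k.+1} | const_off V u f && wproper E f] | f u == ord0]|
          = #|[set f : {ffun T -> 'I_k.+1} | Q (zeros f)]|.
  apply: eq_card => f; rewrite !inE /Q inE; apply/andP/and3P => [[/andP [fV fP] fu]|].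
    split=> //; first by apply/subsetP => x; rewrite !inE -(eqP fu) => /(implyP (forallP fV x)).
    apply/forall_inP => e eE; have := forall_inP fP e eE.
    rewrite (nonmonoE_at _ (uE e eE)) (eqP fu) => /exists_inP [y ye ny].
    by apply: contraNN ny => /subsetP /(_ y ye); rewrite inE.
  move=> [fu /subsetP VZ /forall_inP EZ]; split=> //; apply/andP; split.
    apply/forallP => x; apply/implyP => xV.
    by have := VZ x; rewrite !inE (eqP fu) => ->.
  apply/forall_inP => e eE; rewrite (nonmonoE_at _ (uE e eE)).
  have /subsetPn [y ye ny] := EZ e eE.
  by apply/exists_inP; exists y; rewrite // (eqP fu); move: ny; rewrite inE.
have [m ->] := card_zeros_mod_sq k Q.
have -> : Q setT = false.
  by apply/negP => /and3P [_ _ /forall_inP /(_ e0 e0E)]; rewrite subsetT.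
have -> : [set v | Q (~: [set v])] = Fcore V E :\ u.
  apply/setP => v; rewrite /Q !inE setCS sub1set.
  under eq_forallb => e do rewrite subsetC sub1set !inE negbK.
  by rewrite eq_sym.
rewrite (cardsD1 u (Fcore V E)) uF add1n subn1 /=.
by exists (#|Fcore V E :\ u| + k.+1 * m); nia.
Qed.

Lemma zeros_recolour (T : finType) n (R : {set T}) (a b : 'I_n.+1) (f : {ffun T -> 'I_n.+1}) :
  a != ord0 -> b != ord0 -> zeros (recolour R a b f) = zeros f.
Proof.
move=> a0 b0; apply/setP => y; rewrite !inE ffunE; case: ifP => // _.
by rewrite -{1}(tpermD a0 b0) (inj_eq perm_inj).
Qed.

Lemma nonmono_recolour (T : finType) n (R : {set T}) (a b : 'I_n) (f : {ffun T -> 'I_n})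
    (e : {set T}) :
  (e \subset R) || [disjoint e & R] -> nonmono (recolour R a b f) e = nonmono f e.
Proof.
move=> /orP [/subsetP eR|eR]; apply: nonmono_pattern => x y xe ye; rewrite !ffunE.
  by rewrite !eR // (inj_eq perm_inj).
by rewrite !(disjointFr eR).
Qed.

Definition cut_colouring (T : finType) k (V Va Vb : {set T}) (E : {set {set T}}) (w : T)
    (f : {ffun T -> 'I_k.+1}) : bool :=
  [&& const_off V w f, wproper E f, f w == ord0,
      [exists x in Va :\ w, f x != ord0] & [exists x in Vb :\ w, f x != ord0]].

Lemma cut_colouring_recolour (T : finType) k (V Va Vb R : {set T}) (E : {set {set T}}) (w : T)
    (a b : 'I_k.+1) (f : {ffun T -> 'I_k.+1}) :
  a != ord0 -> b != ord0 ->
  (forall e, e \in E -> w \notin e -> (e \subset R) || [disjoint e & R]) ->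
  cut_colouring V Va Vb E w f -> cut_colouring V Va Vb E w (recolour R a b f).
Proof.
move=> a0 b0 ER /and5P [fV fP fw fa fb].
have z y : (recolour R a b f y == ord0) = (f y == ord0).
  by move/setP/(_ y): (zeros_recolour R f a0 b0); rewrite !inE.
have gw : recolour R a b f w = ord0 by apply/eqP; rewrite z.
apply/and5P; split; rewrite ?gw //.
- apply/forallP => x; apply/implyP => xV; rewrite gw.
  by rewrite z (eqP (implyP (forallP fV x) xV)) (eqP fw).
- apply/forall_inP => e eE; have := forall_inP fP e eE.
  have [we|we] := boolP (w \in e); last by rewrite nonmono_recolour ?ER.
  rewrite !(nonmonoE_at _ we) gw (eqP fw).
  by case/exists_inP => y ye ny; apply/exists_inP; exists y; rewrite ?z.
- by case/exists_inP: fa => y ye ny; apply/exists_inP; exists y; rewrite ?z.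
- by case/exists_inP: fb => y ye ny; apply/exists_inP; exists y; rewrite ?z.
Qed.

Section CutColourings.

Variables (T : finType) (k : nat) (V Va Vb : {set T}) (E : {set {set T}}) (w : T).
Hypothesis Vab : Va :&: Vb = [set w].
Hypothesis edge_side : forall e, e \in E -> [|| w \in e, e \subset Va | e \subset Vb].

(* The nonzero colours can be permuted on all of [T] and, independently, on [Vb] alone:
   an edge avoiding [w] lies on one side of the cut. *)
Lemma cut_colourings_zeros_sq_dvd (Z : {set T}) :
  (k ^ 2 %| #|[set f : {ffun T -> 'I_k.+1} | cut_colouring V Va Vb E w f && (zeros f == Z)]|)%N.
Proof.
set S := [set f | _].
have [->|[f0 f0S]] := set_0Vmem S; first by rewrite cards0 dvdn0.
move: (f0S); rewrite inE => /andP [/and5P [_ _ _ /exists_inP [x1 /setD1P [x1w x1a] f0x1]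
  /exists_inP [x2 /setD1P [x2w x2b] f0x2]] /eqP zf0].
have nz f x : f \in S -> f0 x != ord0 -> f x != ord0.
  rewrite inE => /andP [_ /eqP zf]; apply: contraNN => fx.
  have : x \in zeros f by rewrite inE fx.
  by rewrite zf -zf0 inE.
pose C : {set 'I_k.+1} := ~: [set ord0].
have cardC : #|C| = k by rewrite cardsC1 card_ord.
have c0C : f0 x1 \in C by rewrite !inE.
have recolourS (R : {set T}) c f : c \in C ->
    (forall e, e \in E -> w \notin e -> (e \subset R) || [disjoint e & R]) ->
    f \in S -> recolour R (f0 x1) c f \in S.
  rewrite !inE => c_nz ER /andP [fcut /eqP zf].
  by rewrite zeros_recolour // zf eqxx andbT; apply: cut_colouring_recolour.
have x1Vb : x1 \notin Vb.
  apply: contraNN x1w => x1b; have : x1 \in Va :&: Vb by rewrite inE x1a.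
  by rewrite Vab inE.
rewrite (@card_colour_at _ _ x1 setT C (f0 x1)) ?inE //; first last.
- by move=> c f cC fS; apply: recolourS => // e _ _; rewrite subsetT.
- by move=> f fS; rewrite !inE nz.
rewrite (@card_colour_at _ _ x2 Vb C (f0 x1)) //; first by rewrite cardC mulnA mulnn dvdn_mulr.
- by move=> f; rewrite inE => /andP [fS _]; rewrite !inE nz.
move=> c f cC; rewrite inE => /andP [fS fx1]; rewrite inE ffunE (negPf x1Vb) fx1 andbT.
apply: recolourS => // e eE we; have := edge_side eE; rewrite (negPf we) /= => /orP [ea|->//].
apply/orP; right; apply/pred0P => y /=; apply/negbTE/andP => -[ye yb].
have : y \in Va :&: Vb by rewrite inE (subsetP ea).
by rewrite Vab inE => /eqP yw; rewrite -yw ye in we.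
Qed.

Lemma cut_colourings_sq_dvd :
  (k ^ 2 %| #|[set f : {ffun T -> 'I_k.+1} | cut_colouring V Va Vb E w f]|)%N.
Proof.
rewrite -sum1_card (partition_big (@zeros T k) xpredT) //=; apply: dvdn_sum => Z _.
rewrite sum1_card (eq_card (B := [set f | cut_colouring V Va Vb E w f && (zeros f == Z)])).
  exact: cut_colourings_zeros_sq_dvd.
by move=> f; rewrite !inE unfold_in inE.
Qed.

End CutColourings.

(* A colouring is either constant on [Vb] or, once normalised to [f w = 0], a cut colouring:
   the edge inside [Va] avoiding [w] forces a nonzero colour on [Va :\ w]. *)
Lemma card_colourings_cut (T : finType) k (V Va Vb : {set T}) (E : {set {set T}}) (w : T) :
  [exists e in E, (w \notin e) && (e \subset Va)] ->
  #|[set f : {ffun T -> 'I_k.+1} | const_off V w f && wproper E f]| =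
  #|[set f : {ffun T -> 'I_k.+1} |
       [&& const_off V w f, wproper E f & [forall x in Vb, f x == f w]]]|
  + k.+1 * #|[set f : {ffun T -> 'I_k.+1} | cut_colouring V Va Vb E w f]|.
Proof.
move=> /exists_inP [a aE /andP [wa aVa]].
set A := [set f : {ffun T -> 'I_k.+1} | const_off V w f && wproper E f].
set B := [set f : {ffun T -> 'I_k.+1} | [forall x in Vb, f x == f w]].
rewrite -(cardsID B A); congr (_ + _); first by apply: eq_card => f; rewrite !inE andbA.
rewrite (card_colouring_normal w (S := A :\: B)); last first.
  by move=> f g /(same_pattern_colouring V Vb E w) [fV fP fVb]; rewrite !inE fV fP fVb.
congr (_ * _); apply: eq_card => f; rewrite !inE /cut_colouring.
apply/idP/idP => [/andP [/and3P [nfVb fV fP] fw]|].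
  rewrite fV fP fw /=; apply/andP; split.
    have /exists_inP [x xa /exists_inP [y ya nxy]] := forall_inP fP a aE.
    have aVaw z : z \in a -> z \in Va :\ w.
      by move=> za; rewrite !inE (subsetP aVa) // andbT; apply: contraNneq wa => <-.
    apply/exists_inP; have [fx|] := eqVneq (f x) ord0; last by exists x; rewrite ?aVaw.
    by exists y; rewrite ?aVaw // -fx eq_sym.
  case/forall_inPn: nfVb => x xb nx; apply/exists_inP; exists x; last by rewrite -(eqP fw).
  by rewrite !inE xb andbT; apply: contraNneq nx => ->.
case/and5P => fV fP fw _ /exists_inP [x /setD1P [xw xb] nx].
rewrite fV fP fw !andbT; apply/forall_inPn; exists x => //.
by rewrite (eqP fw).
Qed.

Local Open Scope ring_scope.

(* [k = 0] gives [p = ('X - 1) * q]; then [k %| q.[k + 1]], and [q.[k + 1] = q.[1] (mod k)],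
   so every [k > 0] divides [q.[1]]. *)
Lemma dvdp_XsubC1_sq_eval (p : {poly int}) :
  ('X - 1) ^+ 2 %| p <-> forall k : nat, (k%:Z ^+ 2 %| p.[k.+1%:R])%Z.
Proof.
have natS1 (k : nat) : (k.+1%:R - 1 : int) = k%:R by rewrite -addn1 natrD addrK.
have mon : ('X - 1 : {poly int}) ^+ 2 \is monic by rewrite monic_exp // -polyC1 monicXsubC.
split=> [/(Pdiv.IdomainMonic.dvdpP mon) [q ->] k|p_dvd].
  by rewrite hornerM horner_exp -polyC1 hornerXsubC natS1 natz dvdz_mull.
have /factor_theorem [q pE] : root p 1.
  by move: (p_dvd 0%N); rewrite expr0n /= dvd0z.
have q_dvd (k : nat) : (0 < k)%N -> (k%:Z %| q.[k.+1%:R])%Z.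
  move=> k0; have := p_dvd k.
  by rewrite pE hornerM hornerXsubC natS1 natz expr2 dvdz_mul2r // -lt0n.
have /factor_theorem [r qE] : root (q - q.[1]%:P) 1.
  by rewrite /root hornerD hornerN hornerC subrr.
have q1_dvd (k : nat) : (0 < k)%N -> (k%:Z %| q.[1])%Z.
  move=> k0; have -> : q.[1] = q.[k.+1%:R] - r.[k.+1%:R] * k%:R.
    have := congr1 (horner^~ k.+1%:R) qE.
    rewrite /= hornerD hornerN hornerC hornerM hornerXsubC natS1 => <-.
    by rewrite opprB addrC subrK.
  by rewrite rpredB ?q_dvd // dvdz_mull // natz.
have q1 : q.[1] = 0.
  apply/eqP; apply: contraT => q1n0.
  have := q1_dvd `|q.[1]|.+1 isT; rewrite dvdzE /= => /dvdn_leq.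
  by rewrite absz_gt0 q1n0 ltnn => /(_ isT).
have /factor_theorem [s qE'] : root q 1 by rewrite /root q1.
by rewrite pE qE' -mulrA -expr2 polyC1 dvdp_mulIr.
Qed.

Lemma chrom_poly_sq_dvd (T : finType) (V : {set T}) (E : {set {set T}}) (p : {poly int}) :
  is_chrom_poly V E p ->
  (('X - 1) ^+ 2 %| p <-> forall k, (k ^ 2 %| chrom_count V E k.+1)%N).
Proof.
move=> pP; apply: (iff_trans (dvdp_XsubC1_sq_eval p)).
by split=> dvd k; have := dvd k; rewrite pP // dvdzE abszX natz.
Qed.

Lemma chrom_poly_core_sq_dvd (T : finType) (V : {set T}) (E : {set {set T}}) (p : {poly int}) :
  (forall e, e \in E -> e \subset V) -> E != set0 -> Fcore V E != set0 ->
  is_chrom_poly V E p -> (('X - 1) ^+ 2 %| p <-> #|Fcore V E| = 1%N).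
Proof.
move=> EV E0 /set0Pn [u uF] pP; apply: (iff_trans (chrom_poly_sq_dvd pP)).
have cnt k := chrom_count_core k EV E0 uF.
split=> [dvd|F1 k]; last by have [m ->] := cnt k; rewrite F1 subnn muln0 dvdn_mulr.
have F0 : (0 < #|Fcore V E|)%N by apply/card_gt0P; exists u.
set d := (#|Fcore V E| - 1)%N; have [m cntd] := cnt d.+1.
have : (d.+1 %| d)%N.
  have := dvd d.+1; rewrite cntd -/d dvdn_addl; last exact: dvdn_mulr.
  by rewrite -mulnn dvdn_pmul2l.
have [d0 _|dpos /dvdn_leq] := posnP d; last by rewrite ltnn => /(_ dpos).
by apply/eqP; rewrite eqn_leq F0 andbT -subn_eq0 -/d d0.
Qed.

Lemma chrom_count_contr_eq0 (T : finType) (V V0 : {set T}) (E : {set {set T}}) (w : T) l :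
  w \in V0 -> V0 \subset V -> (forall e, e \in E -> e \subset V) -> ~~ indep V E V0 ->
  chrom_count (contr_V V V0) (contr_E E V0) l = 0%N.
Proof.
move=> wV0 V0V EV; rewrite /indep V0V negb_forall_in => /exists_inP [e eE /negbNE /subsetP eV0].
rewrite (chrom_count_contr _ wV0 V0V EV); apply/eqP; rewrite cards_eq0; apply/eqP/setP => f.
rewrite !inE; apply/negP => /and3P [_ /forall_inP /(_ e eE) fP /forall_inP fV0].
case/exists_inP: fP => x xe /exists_inP [y ye].
by rewrite (eqP (fV0 x (eV0 x xe))) (eqP (fV0 y (eV0 y ye))) eqxx.
Qed.

Lemma chrom_poly_cut_sq_dvd (T : finType) (V Va Vb : {set T}) (E : {set {set T}}) (w : T)
    (p q : {poly int}) :
  (forall e, e \in E -> e \subset V) -> Vb \subset V -> Va :&: Vb = [set w] ->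
  (forall e, e \in E -> [|| w \in e, e \subset Va | e \subset Vb]) ->
  [exists e in E, (w \notin e) && (e \subset Va)] ->
  is_chrom_poly V E p -> is_chrom_poly (contr_V V Vb) (contr_E E Vb) q ->
  ~~ indep V E Va /\ (('X - 1) ^+ 2 %| p <-> (indep V E Vb -> ('X - 1) ^+ 2 %| q)).
Proof.
move=> EV VbV Vab edge_side Va_edge pP qP.
have wVb : w \in Vb by have := set11 w; rewrite -Vab => /setIP [].
have wV := subsetP VbV w wVb.
split.
  case/exists_inP: Va_edge => e eE /andP [_ eVa].
  rewrite /indep negb_and negb_forall_in; apply/orP; right.
  by apply/exists_inP; exists e; rewrite ?negbK.
apply: (iff_trans (chrom_poly_sq_dvd pP)); rewrite (chrom_poly_sq_dvd qP).
have count_eq k : (k ^ 2 %| chrom_count V E k.+1)%N =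
                  (k ^ 2 %| chrom_count (contr_V V Vb) (contr_E E Vb) k.+1)%N.
  rewrite (chrom_count_total _ wV EV) (chrom_count_contr _ wVb VbV EV).
  rewrite (card_colourings_cut k V Vb Va_edge) dvdn_addl //.
  by rewrite dvdn_mull // cut_colourings_sq_dvd.
have [iVb|nVb] := boolP (indep V E Vb).
  by split=> [dvd _ k|/(_ isT) dvd k]; [rewrite -count_eq | rewrite count_eq].
split=> [_ /negP //|_ k].
by rewrite count_eq (chrom_count_contr_eq0 _ wVb VbV EV nVb) dvdn0.
Qed.

Unset Implicit Arguments.

Theorem theorem4 (T : finType) (V : {set T}) (E : {set {set T}}) :
  hypergraph V E -> hconnected V E -> sperner E -> (2 <= #|E|)%N ->
  (Fcore V E != set0 ->
     forall p : {poly int}, is_chrom_poly V E p ->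
       (('X - 1) ^+ 2 %| p <-> #|Fcore V E| = 1%N))
  /\
  (Fcore V E = set0 ->
     forall (w : T) (V1 V2 : {set T}),
       V1 \proper V -> V2 \proper V -> V1 :|: V2 = V -> V1 :&: V2 = [set w] ->
       (forall e, e \in E -> [|| w \in e, e \subset V1 | e \subset V2]) ->
       forall p q1 q2 : {poly int},
         is_chrom_poly V E p ->
         is_chrom_poly (contr_V V V1) (contr_E E V1) q1 ->
         is_chrom_poly (contr_V V V2) (contr_E E V2) q2 ->
         (('X - 1) ^+ 2 %| p <->
            (~~ indep V E V1 /\ ~~ indep V E V2)
            \/ (indep V E V1 /\ ~~ indep V E V2 /\ ('X - 1) ^+ 2 %| q1)
            \/ (indep V E V2 /\ ~~ indep V E V1 /\ ('X - 1) ^+ 2 %| q2))).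
Proof.
move=> hyp _ _ E2; have EV e : e \in E -> e \subset V by case/hyp.
have E0 : E != set0 by rewrite -card_gt0 (leq_trans _ E2).
split=> [F0 p|F0 w V1 V2 /proper_sub V1V /proper_sub V2V _ V12 edge_side p q1 q2 pP q1P q2P].
  exact: chrom_poly_core_sq_dvd.
have edge_side' e : e \in E -> [|| w \in e, e \subset V2 | e \subset V1].
  by move=> eE; case/or3P: (edge_side e eE) => ->; rewrite ?orbT.
have [V1_edge|no_V1_edge] := boolP [exists e in E, (w \notin e) && (e \subset V1)].
  have [/negPf -> pE] := chrom_poly_cut_sq_dvd EV V2V V12 edge_side V1_edge pP q2P.
  by case: (indep V E V2) pE => /= pE; rewrite /is_true in pE *; intuition discriminate.
have [V2_edge|no_V2_edge] := boolP [exists e in E, (w \notin e) && (e \subset V2)].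
  have V21 : V2 :&: V1 = [set w] by rewrite setIC.
  have [/negPf -> pE] := chrom_poly_cut_sq_dvd EV V1V V21 edge_side' V2_edge pP q1P.
  by case: (indep V E V1) pE => /= pE; rewrite /is_true in pE *; intuition discriminate.
suff : w \in Fcore V E by rewrite F0 inE.
rewrite inE (subsetP V1V) /=; last by have := set11 w; rewrite -V12 => /setIP [].
apply/forall_inP => e eE; case/or3P: (edge_side e eE) => // eVi; apply: contraT => we.
- by case/negP: no_V1_edge; apply/exists_inP; exists e; rewrite ?we.
- by case/negP: no_V2_edge; apply/exists_inP; exists e; rewrite ?we.
Qed.
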